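(* Let $L=\mathbb Z^2$ with $B(x,y)=x\begin{pmatrix}2&1\\1&8\end{pmatrix}y^T$, $Q(x)=\frac12B(x,x)$, and for $\alpha,\beta\in\mathbb Q^2$ put $\theta_{\alpha,\beta}(\tau,z)=\sum_{v\in\mathbb Z^2}e(B(\beta,v))\,e(\tau Q(\alpha+v)+B(\alpha+v,z))$ on $\mathbb H\times\mathbb C^2$. Then the 25 functions $\theta_{\alpha,\beta}^5$ with $\alpha\in\{(0,0),(\frac15,\frac35),(\frac25,\frac15),(\frac35,\frac45),(\frac45,\frac25)\}$ and $\beta\in\{(\frac j5,0):j=0,1,2,3,4\}$ are $\mathbb C$-linearly independent.
   Context: $e(x)=\exp(2\pi ix)$, $\mathbb H$ the upper half plane; $B$ is extended bilinearly to $\mathbb C^2$. *)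

From Stdlib Require Import Reals ZArith.
From Coquelicot Require Import Coquelicot.
Open Scope R_scope.

(* e(w) = exp(2 pi i w) for complex w *)
Definition ee (w : C) : C :=
  Cmult (RtoC (exp (- (2 * PI * Im w))))
        (cos (2 * PI * Re w), sin (2 * PI * Re w)).

Definition C2 := (C * C)%type.

Definition Bf (x y : C2) : C :=
  Cplus (Cplus (Cmult (RtoC 2) (Cmult (fst x) (fst y)))
               (Cmult (fst x) (snd y)))
        (Cplus (Cmult (snd x) (fst y))
               (Cmult (RtoC 8) (Cmult (snd x) (snd y)))).

Definition Qf (x : C2) : C := Cmult (RtoC (/2)) (Bf x x).

Definition c2_of_Z (v : Z * Z) : C2 := (RtoC (IZR (fst v)), RtoC (IZR (snd v))).
Definition c2_of_R (a : R * R) : C2 := (RtoC (fst a), RtoC (snd a)).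
Definition c2_add (x y : C2) : C2 := (Cplus (fst x) (fst y), Cplus (snd x) (snd y)).

Definition theta_term (alpha beta : R * R) (tau : C) (z : C2) (v : Z * Z) : C :=
  let av := c2_add (c2_of_R alpha) (c2_of_Z v) in
  Cmult (ee (Bf (c2_of_R beta) (c2_of_Z v)))
        (ee (Cplus (Cmult tau (Qf av)) (Bf av z))).

Definition theta_partial (alpha beta : R * R) (tau : C) (z : C2) (N : nat) : C :=
  sum_n (fun i => sum_n (fun j =>
     theta_term alpha beta tau z
       (Z.of_nat i - Z.of_nat N, Z.of_nat j - Z.of_nat N)%Z) (2 * N)) (2 * N).

(* theta_{alpha,beta}(tau,z): the (absolutely convergent for Im tau > 0)
   sum over Z^2, as the limit of the square partial sums *)
Definition theta (alpha beta : R * R) (tau : C) (z : C2) : C :=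
  (real (Lim_seq (fun N => Re (theta_partial alpha beta tau z N))),
   real (Lim_seq (fun N => Im (theta_partial alpha beta tau z N)))) : C.

Definition alpha_of (a : nat) : R * R :=
  match a with
  | 0%nat => (0, 0)
  | 1%nat => (1/5, 3/5)
  | 2%nat => (2/5, 1/5)
  | 3%nat => (3/5, 4/5)
  | _ => (4/5, 2/5)
  end.

Definition beta_of (b : nat) : R * R := (INR b / 5, 0).

Definition Cpow5 (w : C) : C := Cmult w (Cmult w (Cmult w (Cmult w w))).

From Stdlib Require Import Reals ZArith Lra Lia Psatz List.
From Coquelicot Require Import Coquelicot.
Open Scope R_scope.

(* Take [tau = i t] and [z = x - i t P] with [x], [P] real.  Up to the factor [q ^ Q(P)],
   [q = exp (-2 pi t)], the term of [theta_(alpha, beta)] at [v] has modulus [q ^ Q(alpha + v - P)],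
   so for [t -> oo] it is governed by the lattice points nearest to [P - alpha].  Choose
   [P = alpha_a0] and write [B(p, x) = p1 phi + p2 th].  For [alpha = alpha_a0] the nearest points
   are [v = 0] and [v = (1, 0), (-1, 0)], at [Q = 0, 1]: the normalised theta is
   [g(th) (1 + q s_b(phi))] up to [O(q^3)], where [|g| = 1].  For every other [alpha_a] the
   minimum of [Q] is either [2/5], attained at two points with the same second coordinate, or at
   least [1/2].  Hence a vanishing combination of fifth powers gives
   [g(th)^5 T(t) + q^2 P(th) = O(q^(5/2))] with [T(t) = sum_b c_(a0,b) (1 + q s_b)^5], and the shift
   [th -> th + 1/2] multiplies [g^5] by some [rho] but [P] by [-rho], so [T(t) = O(q^(5/2))].  Thus
   [sum_b c_(a0,b) s_b(phi)^k = 0] for [k <= 2] and every [phi]; at [phi = 0, 1/4, 1/8] this says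
   that the discrete Fourier transform of [b |-> c_(a0,b)] on [Z/5] vanishes. *)

Lemma Cmod_sum_n_le (h : nat -> C) n : Cmod (sum_n h n) <= sum_n (fun k => Cmod (h k)) n.
Proof. apply (norm_sum_n_m h 0 n). Qed.

Lemma sum_n_ext_C (f g : nat -> C) n : (forall k, f k = g k) -> sum_n f n = sum_n g n :> C.
Proof. intros H; now apply sum_n_ext. Qed.

Lemma sum_n_zero (g : nat -> C) n : (forall k, (k <= n)%nat -> g k = 0%C) -> sum_n g n = RtoC 0.
Proof.
  induction n as [|n IH]; intros H.
  - rewrite sum_O; apply H; lia.
  - rewrite sum_Sn, IH by (intros; apply H; lia).
    rewrite H by lia; apply Cplus_0_r.
Qed.

Lemma sum_n_single (g : nat -> C) n k0 : (k0 <= n)%nat ->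
  (forall k, (k <= n)%nat -> k <> k0 -> g k = 0%C) -> sum_n g n = g k0.
Proof.
  intros Hk H; induction n as [|n IH].
  - replace k0 with O by lia; apply sum_O.
  - rewrite sum_Sn; change plus with Cplus.
    destruct (Nat.eq_dec k0 (S n)) as [->|Hne].
    + rewrite sum_n_zero by (intros; apply H; lia); apply Cplus_0_l.
    + rewrite IH, (H (S n)) by (lia || (intros; apply H; lia)); apply Cplus_0_r.
Qed.

Lemma sum_n_sub_C (f g : nat -> C) n :
  sum_n (fun a => f a - g a)%C n = (sum_n f n - sum_n g n)%C :> C.
Proof.
  induction n as [|n IH]; [rewrite !sum_O; reflexivity|].
  rewrite !sum_Sn, IH; change plus with Cplus; ring.
Qed.

Lemma sum_n_le_loc (u v : nat -> R) n : (forall k, (k <= n)%nat -> u k <= v k) ->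
  sum_n u n <= sum_n v n.
Proof.
  induction n as [|n IH]; intros H; [rewrite !sum_O; apply H; lia|].
  rewrite !sum_Sn; apply Rplus_le_compat; [apply IH; intros; apply H; lia|apply H; lia].
Qed.

Lemma sum_n_nonneg (a : nat -> R) n : (forall k, 0 <= a k) -> 0 <= sum_n a n.
Proof.
  intros H; apply Rle_trans with (sum_n (fun _ => 0) n).
  - rewrite sum_n_const; lra.
  - now apply sum_n_m_le.
Qed.

Lemma sum_n_mult_sum_n (a b : nat -> R) m n :
  sum_n (fun i => sum_n (fun j => a i * b j) n) m = sum_n a m * sum_n b n.
Proof.
  rewrite <- (sum_n_mult_r (K := R_Ring)); apply sum_n_ext; intros i.
  apply (sum_n_mult_l (K := R_Ring)).
Qed.

Lemma Cmod_le_of_sum_eq_0 (W : nat -> C) (X : C) n a0 (E : nat -> R) : (a0 <= n)%nat ->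
  sum_n W n = 0 :> C ->
  (forall a, (a <= n)%nat -> Cmod (W a - if Nat.eq_dec a a0 then X else RtoC 0)%C <= E a) ->
  Cmod X <= sum_n E n.
Proof.
  intros Ha0 HW HE.
  assert (HX : (- sum_n (fun a => W a - if Nat.eq_dec a a0 then X else RtoC 0)%C n)%C = X).
  { rewrite sum_n_sub_C, HW, (sum_n_single _ _ a0 Ha0).
    - destruct (Nat.eq_dec a0 a0) as [_|]; [ring|congruence].
    - intros a _ Ha; destruct (Nat.eq_dec a a0); congruence. }
  rewrite <- HX, Cmod_opp; eapply Rle_trans; [apply Cmod_sum_n_le|].
  apply sum_n_le_loc, HE.
Qed.

Definition cis (x : R) : C := (cos x, sin x).

Lemma Cmod_cis x : Cmod (cis x) = 1.
Proof.
  unfold Cmod, cis; simpl.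
  pose proof (sin2_cos2 x) as H; unfold Rsqr in H.
  replace (cos x * (cos x * 1) + sin x * (sin x * 1)) with 1 by lra.
  apply sqrt_1.
Qed.

Lemma cis_add x y : (cis x * cis y)%C = cis (x + y).
Proof. unfold cis, Cmult; simpl; rewrite cos_plus, sin_plus; f_equal; ring. Qed.

Lemma cis_0 : cis 0 = 1%C.
Proof. unfold cis; rewrite cos_0, sin_0; reflexivity. Qed.

Lemma Cpow_cis x n : (cis x ^ n)%C = cis (INR n * x).
Proof.
  induction n as [|n IH].
  - simpl; rewrite Rmult_0_l; exact (eq_sym cis_0).
  - rewrite Cpow_S, IH, cis_add, S_INR; f_equal; ring.
Qed.

Lemma cis_add_2PI_mult x k : cis (x + 2 * INR k * PI) = cis x.
Proof. unfold cis; rewrite cos_period, sin_period; reflexivity. Qed.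

Lemma cis_add_PI x : cis (x + PI) = (- cis x)%C.
Proof. unfold cis, Copp; rewrite cos_plus, sin_plus, cos_PI, sin_PI; simpl; f_equal; ring. Qed.

Lemma cis_neq_1 x : 0 < x < 2 * PI -> cis x <> 1%C.
Proof.
  intros Hx E; injection E as Ec _; pose proof PI_RGT_0.
  destruct (Rle_lt_dec x PI).
  - pose proof (cos_decreasing_1 0 x ltac:(lra) ltac:(lra) ltac:(lra) ltac:(lra) ltac:(lra)).
    rewrite cos_0 in *; lra.
  - pose proof (cos_increasing_1 x (2 * PI) ltac:(lra) ltac:(lra) ltac:(lra) ltac:(lra) ltac:(lra)).
    rewrite cos_2PI in *; lra.
Qed.

Lemma Cpow5_Cpow w : Cpow5 w = (w ^ 5)%C.
Proof. unfold Cpow5; simpl; ring. Qed.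

Lemma ee_polar w : ee w = (RtoC (exp (- (2 * PI * Im w))) * cis (2 * PI * Re w))%C.
Proof. reflexivity. Qed.

Lemma exp_le_exp x y : x <= y -> exp x <= exp y.
Proof. intros [H|<-]; [left; now apply exp_increasing|apply Rle_refl]. Qed.

Lemma exp_le_1 x : x <= 0 -> exp x <= 1.
Proof. intros; rewrite <- exp_0; now apply exp_le_exp. Qed.

(* [qpow r t = q ^ r] for the nome [q = e (i t) = exp (-2 pi t)]. *)
Definition qpow (r t : R) : R := exp (- (2 * PI * t * r)).

Lemma qpow_pos r t : 0 < qpow r t.
Proof. apply exp_pos. Qed.

Lemma qpow_0 t : qpow 0 t = 1.
Proof. unfold qpow; rewrite Rmult_0_r, Ropp_0; apply exp_0. Qed.

Lemma qpow_add r s t : qpow r t * qpow s t = qpow (r + s) t.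
Proof. unfold qpow; rewrite <- exp_plus; f_equal; ring. Qed.

Lemma qpow_le r s t : 0 <= t -> r <= s -> qpow s t <= qpow r t.
Proof.
  intros Ht Hrs; unfold qpow.
  apply exp_le_exp; pose proof PI_RGT_0.
  assert (0 <= 2 * PI * t * (s - r)) by (apply Rmult_le_pos; nra).
  nra.
Qed.

Lemma qpow_le_1 r t : 0 <= t -> 0 <= r -> qpow r t <= 1.
Proof.
  intros Ht Hr; rewrite <- (qpow_0 t); now apply qpow_le.
Qed.

Lemma Cmod_qpow r t : Cmod (qpow r t) = qpow r t.
Proof. rewrite Cmod_R; apply Rabs_pos_eq, Rlt_le, qpow_pos. Qed.

(** * Vanishing by exponential decay *)

Lemma eq_0_of_qpow_decay (X : C) L r : 0 < r ->
  (forall t, 1 <= t -> Cmod X <= L * qpow r t) -> X = 0%C.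
Proof.
  intros Hr H.
  destruct (Req_dec (Cmod X) 0) as [E|E]; [now apply Cmod_eq_0|exfalso].
  assert (HX : 0 < Cmod X) by (pose proof (Cmod_ge_0 X); lra).
  assert (HL : 0 < L).
  { pose proof (H 1 (Rle_refl _)); pose proof (qpow_pos r 1); nra. }
  pose proof PI_RGT_0.
  set (a := 2 * PI * r).
  assert (Ha : 0 < a) by (unfold a; nra).
  set (t := 1 + L / (a * Cmod X)).
  assert (Ht : 1 <= t) by (unfold t; assert (0 < L / (a * Cmod X)) by
    (apply Rdiv_lt_0_compat; nra); lra).
  specialize (H t Ht); unfold qpow in H.
  (* [e^x > 1 + x] turns exponential decay into a linear bound that fails for large [t] *)
  pose proof (exp_ineq1 (a * t) ltac:(nra)) as Hexp.
  assert (Hmul : Cmod X * exp (a * t) <= L).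
  { replace (- (2 * PI * t * r)) with (- (a * t)) in H by (unfold a; ring).
    rewrite exp_Ropp in H.
    apply (Rmult_le_compat_r (exp (a * t))) in H; [|left; apply exp_pos].
    rewrite Rmult_assoc, Rinv_l in H by (apply Rgt_not_eq, exp_pos); lra. }
  assert (Cmod X * (a * t) = a * Cmod X + L) by (unfold t; field; nra).
  nra.
Qed.

Definition Cpoly (A : nat -> C) (n : nat) (x : C) : C := sum_n (fun k => A k * x ^ k)%C n.

Lemma Cpoly_S A n x : Cpoly A (S n) x = (A O + x * Cpoly (fun k => A (S k)) n x)%C.
Proof.
  unfold Cpoly; induction n as [|n IH].
  - rewrite sum_Sn, !sum_O; change plus with Cplus; simpl; ring.
  - rewrite sum_Sn, IH, (sum_Sn _ n); change plus with Cplus; simpl; ring.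
Qed.

Lemma Cmod_Cpoly_le A n x : Cmod x <= 1 ->
  Cmod (Cpoly A n x) <= sum_n (fun k => Cmod (A k)) n.
Proof.
  intros Hx; unfold Cpoly.
  eapply Rle_trans; [apply Cmod_sum_n_le|].
  apply sum_n_m_le; intros k; rewrite Cmod_mult, Cmod_pow.
  pose proof (pow_le _ k (Cmod_ge_0 x)); pose proof (pow_incr _ 1 k (conj (Cmod_ge_0 x) Hx)).
  rewrite pow1 in *; pose proof (Cmod_ge_0 (A k)); nra.
Qed.

Lemma Cpoly_const_eq_0 A n K r : 0 < r ->
  (forall t, 1 <= t -> Cmod (Cpoly A n (qpow 1 t)) <= K * qpow r t) -> A O = 0%C.
Proof.
  intros Hr H; destruct n as [|n].
  - apply (eq_0_of_qpow_decay _ K r Hr); intros t Ht.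
    specialize (H t Ht); unfold Cpoly in H; rewrite sum_O in H; simpl in H; rewrite Cmult_1_r in H; exact H.
  - set (r' := Rmin r 1); set (M := sum_n (fun k => Cmod (A (S k))) n).
    assert (Hr' : 0 < r') by (unfold r'; apply Rmin_glb_lt; lra).
    apply (eq_0_of_qpow_decay _ (Rabs K + M) r' Hr'); intros t Ht.
    specialize (H t Ht); rewrite Cpoly_S in H.
    set (P := Cpoly _ n _) in H.
    assert (HP : Cmod P <= M) by (apply Cmod_Cpoly_le; rewrite Cmod_qpow; apply qpow_le_1; lra).
    assert (Hq : qpow 1 t <= qpow r' t) by (apply qpow_le; [lra|apply Rmin_r]).
    assert (Hqr : qpow r t <= qpow r' t) by (apply qpow_le; [lra|apply Rmin_l]).
    replace (A O) with (A O + qpow 1 t * P - qpow 1 t * P)%C by ring.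
    eapply Rle_trans; [apply Cmod_triangle|].
    rewrite Cmod_opp, Cmod_mult, Cmod_qpow.
    pose proof (qpow_pos 1 t); pose proof (Cmod_ge_0 P); pose proof (Rle_abs K).
    pose proof (qpow_pos r t); pose proof (qpow_pos r' t).
    assert (K * qpow r t <= Rabs K * qpow r' t).
    { pose proof (Rabs_pos K); apply Rle_trans with (Rabs K * qpow r t); [nra|].
      now apply Rmult_le_compat_l. }
    assert (qpow 1 t * Cmod P <= qpow r' t * M) by (apply Rmult_le_compat; lra).
    nra.
Qed.

Lemma Cpoly_low_coefs_eq_0 A n m K r : (m <= n)%nat -> INR m < r ->
  (forall t, 1 <= t -> Cmod (Cpoly A n (qpow 1 t)) <= K * qpow r t) ->
  forall k, (k <= m)%nat -> A k = 0%C.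
Proof.
  revert A n r; induction m as [|m IH]; intros A n r Hmn Hmr H k Hk.
  - replace k with O by lia; exact (Cpoly_const_eq_0 A n K r Hmr H).
  - pose proof (Cpoly_const_eq_0 A n K r ltac:(pose proof (pos_INR (S m)); lra) H) as H0.
    destruct k as [|k]; [exact H0|].
    destruct n as [|n]; [lia|].
    (* with [A 0 = 0], dividing by [q] lowers the decay exponent by one *)
    apply (IH (fun k => A (S k)) n (r - 1)); [lia| rewrite S_INR in Hmr; lra| |lia].
    intros t Ht; specialize (H t Ht).
    rewrite Cpoly_S, H0, Cplus_0_l, Cmod_mult, Cmod_qpow in H.
    apply (Rmult_le_reg_l (qpow 1 t)); [apply qpow_pos|].
    replace (qpow 1 t * (K * qpow (r - 1) t)) with (K * (qpow 1 t * qpow (r - 1) t)) by ring.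
    rewrite qpow_add; replace (1 + (r - 1)) with r by ring; exact H.
Qed.

Lemma Cmod_Cpow_sub_le (x y : C) n M : Cmod x <= M -> Cmod y <= M ->
  Cmod (x ^ n - y ^ n)%C <= INR n * M ^ (n - 1) * Cmod (x - y)%C.
Proof.
  intros Hx Hy; assert (HM : 0 <= M) by (pose proof (Cmod_ge_0 x); lra).
  pose proof (Cmod_ge_0 (x - y)).
  induction n as [|n IH].
  - simpl; unfold Cminus; rewrite Cplus_opp_r, Cmod_0; lra.
  - replace (x ^ S n - y ^ S n)%C with (x * (x ^ n - y ^ n) + (x - y) * y ^ n)%C
      by (rewrite !Cpow_S; ring).
    eapply Rle_trans; [apply Cmod_triangle|].
    rewrite !Cmod_mult, Cmod_pow.
    pose proof (pow_le _ n (Cmod_ge_0 y)); pose proof (pow_incr _ M n (conj (Cmod_ge_0 y) Hy)).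
    pose proof (Cmod_ge_0 (x ^ n - y ^ n)%C).
    assert (Cmod x * Cmod (x ^ n - y ^ n)%C <= M * (INR n * M ^ (n - 1) * Cmod (x - y)%C))
      by (apply Rmult_le_compat; try apply Cmod_ge_0; lra).
    assert (Hpow : M * (INR n * M ^ (n - 1)) = INR n * M ^ n)
      by (destruct n; [simpl; ring|replace (S n - 1)%nat with n by lia; simpl; ring]).
    replace (S n - 1)%nat with n by lia; rewrite S_INR.
    pose proof (Rmult_le_compat_r (Cmod (x - y)) _ _ H H2).
    nra.
Qed.

Lemma Cmod_Cpow5_sub_le (F M : C) K e r t : 1 <= t -> 0 <= K -> 0 <= r <= e -> 5/2 <= 4 * r + e ->
  Cmod (F - M) <= K * qpow e t -> Cmod M <= 3 * qpow r t ->
  Cmod (Cpow5 F - Cpow5 M) <= 5 * (3 + K) ^ 4 * K * qpow (5/2) t.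
Proof.
  intros Ht HK Hre He HF HM.
  pose proof (qpow_le r e t ltac:(lra) (proj2 Hre)); pose proof (qpow_pos e t).
  assert (HM' : Cmod M <= (3 + K) * qpow r t) by nra.
  assert (HF' : Cmod F <= (3 + K) * qpow r t).
  { replace F with (M + (F - M))%C by ring.
    eapply Rle_trans; [apply Cmod_triangle|]; nra. }
  rewrite !Cpow5_Cpow; eapply Rle_trans; [apply (Cmod_Cpow_sub_le _ _ _ _ HF' HM')|].
  replace (INR 5 * ((3 + K) * qpow r t) ^ (5 - 1) * Cmod (F - M))
    with (5 * (3 + K) ^ 4 * (qpow r t * qpow r t * qpow r t * qpow r t * Cmod (F - M)))
    by (simpl; ring).
  replace (5 * (3 + K) ^ 4 * K * qpow (5/2) t) with (5 * (3 + K) ^ 4 * (K * qpow (5/2) t)) by ring.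
  apply Rmult_le_compat_l; [pose proof (pow_le (3 + K) 4); nra|].
  rewrite !qpow_add.
  pose proof (qpow_pos (r + r + r + r) t).
  apply Rle_trans with (qpow (r + r + r + r) t * (K * qpow e t)); [apply Rmult_le_compat_l; lra|].
  rewrite Rmult_comm, Rmult_assoc, qpow_add.
  apply Rmult_le_compat_l; [lra|apply qpow_le; lra].
Qed.

Definition row (c F : nat -> C) : C := sum_n (fun b => c b * Cpow5 (F b))%C 4.

Definition l1 (c : nat -> C) : R := sum_n (fun b => Cmod (c b)) 4.

Lemma Cmod_row_sub_le c F M E : (forall b, Cmod (Cpow5 (F b) - Cpow5 (M b)) <= E) ->
  Cmod (row c F - row c M) <= l1 c * E.
Proof.
  intros H.
  assert (Hsum : (row c F - row c M)%C = sum_n (fun b => c b * (Cpow5 (F b) - Cpow5 (M b)))%C 4)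
    by (unfold row; rewrite !sum_Sn, !sum_O; change plus with Cplus; ring).
  rewrite Hsum.
  eapply Rle_trans; [apply Cmod_sum_n_le|].
  unfold l1; rewrite <- (sum_n_mult_r (K := R_Ring)).
  apply sum_n_m_le; intros b; rewrite Cmod_mult.
  apply Rmult_le_compat_l; [apply Cmod_ge_0|apply H].
Qed.

Lemma row_scale c F G (k : C) : (forall b, Cpow5 (G b) = (k * Cpow5 (F b))%C) ->
  row c G = (k * row c F)%C.
Proof. intros H; unfold row; rewrite !sum_Sn, !sum_O, !H; change plus with Cplus; ring. Qed.

Lemma Cmod_twisted_sum_le (r X0 X1 Y0 Y1 Z : C) e : Cmod r = 1 -> (r * Y0 + Y1)%C = Z ->
  Cmod (X0 - Y0) <= e -> Cmod (X1 - Y1) <= e -> Cmod (r * X0 + X1 - Z) <= 2 * e.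
Proof.
  intros Hr <- H0 H1.
  replace (r * X0 + X1 - (r * Y0 + Y1))%C with (r * (X0 - Y0) + (X1 - Y1))%C by ring.
  eapply Rle_trans; [apply Cmod_triangle|]; rewrite Cmod_mult, Hr; lra.
Qed.

Definition binom5 (k : nat) : R :=
  match k with O | 5%nat => 1 | 1%nat | 4%nat => 5 | _ => 10 end.

Lemma row_one_plus (c s : nat -> C) (x : C) :
  row c (fun b => 1 + x * s b)%C = Cpoly (fun k => binom5 k * sum_n (fun b => c b * s b ^ k) 4)%C 5 x.
Proof.
  unfold row, Cpoly, Cpow5; rewrite !sum_Sn, !sum_O; cbv beta.
  rewrite !sum_Sn, !sum_O; change plus with Cplus; simpl; ring.
Qed.

(** * Discrete Fourier analysis modulo 5 *)

Lemma Cgeom_sum (w : C) n : ((w - 1) * sum_n (fun k => w ^ k)%C n)%C = (w ^ S n - 1)%C.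
Proof.
  induction n as [|n IH].
  - rewrite sum_O; simpl; ring.
  - rewrite sum_Sn; change plus with Cplus.
    rewrite Cmult_plus_distr_l, IH, (Cpow_S w (S n)); ring.
Qed.

Lemma root_of_unity_sum_eq_0 (w : C) n : (w ^ S n)%C = 1%C -> w <> 1%C ->
  sum_n (fun k => w ^ k)%C n = 0 :> C.
Proof.
  intros Hn Hw; pose proof (Cgeom_sum w n) as H; rewrite Hn in H.
  assert (Hw1 : (w - 1)%C <> 0%C) by (apply Cminus_eq_contra, Hw).
  rewrite <- (Cmult_1_l (sum_n _ n)), <- (Cinv_l _ Hw1), <- Cmult_assoc, H.
  unfold Cminus; rewrite Cplus_opp_r; apply Cmult_0_r.
Qed.

Lemma sum_n_C_one n : sum_n (fun _ => RtoC 1) n = RtoC (INR (S n)).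
Proof.
  induction n as [|n IH]; [rewrite sum_O; reflexivity|].
  rewrite sum_Sn, IH, (S_INR (S n)), RtoC_plus; reflexivity.
Qed.

Lemma dft_eq_0 (w : C) N (c : nat -> C) :
  (w ^ S N)%C = 1%C -> (forall m, (0 < m <= N)%nat -> (w ^ m)%C <> 1%C) ->
  (forall k, (k <= N)%nat -> sum_n (fun b => c b * w ^ (k * b))%C N = RtoC 0) ->
  forall j, (j <= N)%nat -> c j = 0%C.
Proof.
  intros Hw Hprim H j Hj.
  set (e b := (b + (S N - j))%nat).
  (* pairing with the [j]-th character turns the inner sums into geometric sums in [w ^ e b] *)
  assert (Hinv : sum_n (fun b => c b * sum_n (fun k => (w ^ e b) ^ k)%C N)%C N = RtoC 0).
  { rewrite (sum_n_ext _ (fun b => sum_n (fun k => c b * (w ^ e b) ^ k)%C N))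
      by (intros b; symmetry; apply (sum_n_mult_l (K := C_Ring))).
    rewrite sum_n_switch; apply sum_n_zero; intros k Hk.
    rewrite (sum_n_ext_C _ (fun b => w ^ (k * (S N - j)) * (c b * w ^ (k * b)))%C).
    - rewrite (sum_n_mult_l (K := C_Ring)); change (mult ?u ?v) with (u * v)%C.
      rewrite H by exact Hk; apply Cmult_0_r.
    - intros b; rewrite <- Cpow_mult_r.
      replace (e b * k)%nat with (k * b + k * (S N - j))%nat by (unfold e; ring).
      rewrite Cpow_add_r; ring. }
  rewrite (sum_n_single _ _ j Hj) in Hinv.
  - unfold e in Hinv; replace (j + (S N - j))%nat with (S N) in Hinv by lia.
    rewrite Hw, (sum_n_ext _ (fun _ => RtoC 1)), sum_n_C_one in Hinv by (intros; apply Cpow_1_l).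
    assert (HN : RtoC (INR (S N)) <> 0%C)
      by (intros E; apply (not_0_INR (S N)); [lia|]; now injection E).
    transitivity (c j * RtoC (INR (S N)) * / RtoC (INR (S N)))%C; [field; exact HN|].
    rewrite Hinv; ring.
  - intros b HbN Hb.
    rewrite root_of_unity_sum_eq_0; [apply Cmult_0_r| |].
    + rewrite <- Cpow_mult_r, Nat.mul_comm, Cpow_mult_r, Hw; apply Cpow_1_l.
    + unfold e; destruct (Nat.lt_ge_cases b j) as [Hbj|Hbj].
      * apply Hprim; lia.
      * replace (b + (S N - j))%nat with (S N + (b - j))%nat by lia.
        rewrite Cpow_add_r, Hw, Cmult_1_l; apply Hprim; lia.
Qed.

Definition zeta5 : C := cis (2 * PI / 5).

Lemma zeta5_pow m : (zeta5 ^ m)%C = cis (2 * PI * (INR m / 5)).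
Proof. unfold zeta5; rewrite Cpow_cis; f_equal; field. Qed.

Lemma zeta5_pow_5 : (zeta5 ^ 5)%C = 1%C.
Proof.
  rewrite zeta5_pow; replace (2 * PI * (INR 5 / 5)) with (0 + 2 * INR 1 * PI) by (simpl; field).
  rewrite cis_add_2PI_mult; exact cis_0.
Qed.

Lemma zeta5_primitive m : (0 < m <= 4)%nat -> (zeta5 ^ m)%C <> 1%C.
Proof.
  intros Hm; rewrite zeta5_pow; apply cis_neq_1; pose proof PI_RGT_0.
  assert (0 < INR m <= 4) by (split; [apply lt_0_INR|replace 4 with (INR 4) by (simpl; ring); apply le_INR]; lia).
  split; nra.
Qed.

(* [2 cos (2 pi (2 b / 5 + phi))], the relative phase of the lattice vectors [(1, 0)] and [(-1, 0)]
   in the self term (see [self_main_terms]). *)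
Definition neighbour_sum (b : nat) (phi : R) : C :=
  (cis (2 * PI * (2 * INR b / 5 + phi)) + cis (- (2 * PI * (2 * INR b / 5 + phi))))%C.

Definition moment (c : nat -> C) (phi : R) (k : nat) : C :=
  sum_n (fun b => c b * neighbour_sum b phi ^ k)%C 4.

Definition dft5 (c : nat -> C) (k : nat) : C := sum_n (fun b => c b * zeta5 ^ (k * b))%C 4.

Lemma neighbour_sum_zeta5 b phi :
  neighbour_sum b phi = (zeta5 ^ (2 * b) * cis (2 * PI * phi) + zeta5 ^ (3 * b) * cis (- (2 * PI * phi)))%C.
Proof.
  unfold neighbour_sum; rewrite !zeta5_pow, !cis_add, !mult_INR.
  rewrite <- (cis_add_2PI_mult (- (2 * PI * (2 * INR b / 5 + phi))) b).
  f_equal; f_equal; simpl; field.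
Qed.

Lemma moment_1 c phi :
  moment c phi 1 = (cis (2 * PI * phi) * dft5 c 2 + cis (- (2 * PI * phi)) * dft5 c 3)%C.
Proof.
  unfold moment, dft5; rewrite !sum_Sn, !sum_O; change plus with Cplus.
  rewrite !neighbour_sum_zeta5; ring.
Qed.

Lemma neighbour_sum_sqr b phi : (neighbour_sum b phi ^ 2)%C =
  (zeta5 ^ (4 * b) * cis (2 * PI * (2 * phi)) + 2 + zeta5 ^ (1 * b) * cis (- (2 * PI * (2 * phi))))%C.
Proof.
  rewrite neighbour_sum_zeta5.
  set (x := 2 * PI * phi).
  assert (H5 : forall k, (zeta5 ^ (5 * b + k))%C = (zeta5 ^ k)%C)
    by (intros; rewrite Cpow_add_r, Cpow_mult_r, zeta5_pow_5, Cpow_1_l; ring).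
  assert (HAA : (zeta5 ^ (2 * b) * zeta5 ^ (2 * b))%C = (zeta5 ^ (4 * b))%C)
    by (rewrite <- Cpow_add_r; f_equal; lia).
  assert (HAB : (zeta5 ^ (2 * b) * zeta5 ^ (3 * b))%C = 1%C)
    by (rewrite <- Cpow_add_r; replace (2 * b + 3 * b)%nat with (5 * b + 0)%nat by lia; apply H5).
  assert (HBB : (zeta5 ^ (3 * b) * zeta5 ^ (3 * b))%C = (zeta5 ^ (1 * b))%C)
    by (rewrite <- Cpow_add_r; replace (3 * b + 3 * b)%nat with (5 * b + 1 * b)%nat by lia; apply H5).
  assert (Hee : (cis x * cis x)%C = cis (2 * PI * (2 * phi))) by (rewrite cis_add; f_equal; unfold x; ring).
  assert (Hee' : (cis (- x) * cis (- x))%C = cis (- (2 * PI * (2 * phi))))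
    by (rewrite cis_add; f_equal; unfold x; ring).
  assert (He : (cis x * cis (- x))%C = 1%C) by (rewrite cis_add, Rplus_opp_r; exact cis_0).
  transitivity (zeta5 ^ (2 * b) * zeta5 ^ (2 * b) * (cis x * cis x) +
    2 * ((zeta5 ^ (2 * b) * zeta5 ^ (3 * b)) * (cis x * cis (- x))) +
    zeta5 ^ (3 * b) * zeta5 ^ (3 * b) * (cis (- x) * cis (- x)))%C; [simpl; ring|].
  rewrite HAA, HAB, HBB, Hee, Hee', He; ring.
Qed.

Lemma moment_2 c phi : moment c phi 2 =
  (cis (2 * PI * (2 * phi)) * dft5 c 4 + 2 * dft5 c 0 + cis (- (2 * PI * (2 * phi))) * dft5 c 1)%C.
Proof.
  unfold moment, dft5; rewrite !sum_Sn, !sum_O; change plus with Cplus.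
  rewrite !neighbour_sum_sqr; simpl (0 * _)%nat; simpl Cpow; ring.
Qed.

Lemma phase_pair_eq_0 (A B : C) :
  (A * cis 0 + B * cis (- 0))%C = 0%C -> (A * cis (PI / 2) + B * cis (- (PI / 2)))%C = 0%C ->
  A = 0%C /\ B = 0%C.
Proof.
  rewrite Ropp_0, cis_0; unfold cis; rewrite cos_neg, sin_neg, cos_PI2, sin_PI2.
  destruct A as [a1 a2], B as [b1 b2]; unfold Cmult, Cplus; simpl; intros E1 E2.
  injection E1 as E1 E1'; injection E2 as E2 E2'.
  split; apply injective_projections; simpl; lra.
Qed.

Lemma coefs_eq_0_of_moments (c : nat -> C) :
  (forall phi, moment c phi 0 = 0%C /\ moment c phi 1 = 0%C /\ moment c phi 2 = 0%C) ->
  forall b, (b <= 4)%nat -> c b = 0%C.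
Proof.
  intros H; apply (dft_eq_0 zeta5 4 c zeta5_pow_5 zeta5_primitive).
  assert (F0 : dft5 c 0 = 0%C).
  { destruct (H 0) as [H0 _]; rewrite <- H0; unfold moment, dft5.
    apply sum_n_ext_C; intros b; simpl; ring. }
  assert (F23 : dft5 c 2 = 0%C /\ dft5 c 3 = 0%C).
  { apply phase_pair_eq_0.
    - destruct (H 0) as [_ [H1 _]]; rewrite moment_1, Rmult_0_r in H1; rewrite <- H1; ring.
    - destruct (H (1/4)) as [_ [H1 _]]; rewrite moment_1 in H1.
      replace (2 * PI * (1/4)) with (PI / 2) in H1 by field; rewrite <- H1; ring. }
  assert (F41 : dft5 c 4 = 0%C /\ dft5 c 1 = 0%C).
  { apply phase_pair_eq_0.
    - destruct (H 0) as [_ [_ H2]]; rewrite moment_2, F0 in H2.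
      replace (2 * PI * (2 * 0)) with 0 in H2 by ring; rewrite <- H2; ring.
    - destruct (H (1/8)) as [_ [_ H2]]; rewrite moment_2, F0 in H2.
      replace (2 * PI * (2 * (1/8))) with (PI / 2) in H2 by field; rewrite <- H2; ring. }
  intros k Hk; destruct k as [|[|[|[|[|k]]]]]; try lia; unfold dft5 in *; tauto.
Qed.

(** * Theta at purely imaginary tau *)

(* [Qf] and [Bf] on real vectors. *)
Definition Qr (w : R * R) : R := fst w ^ 2 + fst w * snd w + 4 * snd w ^ 2.

Definition Br (p x : R * R) : R :=
  2 * fst p * fst x + fst p * snd x + snd p * fst x + 8 * snd p * snd x.

Definition IZR2 (v : Z * Z) : R * R := (IZR (fst v), IZR (snd v)).

Definition shift (p : R * R) (v : Z * Z) : R * R := (fst p + IZR (fst v), snd p + IZR (snd v)).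

Definition sub2 (p q : R * R) : R * R := (fst p - fst q, snd p - snd q).

Definition z_at (x P : R * R) (t : R) : C2 := ((fst x, - t * fst P), (snd x, - t * snd P)).

Definition lattice_term (al be P x : R * R) (t : R) (v : Z * Z) : C :=
  (qpow (Qr (shift (sub2 al P) v)) t * cis (2 * PI * (Br be (IZR2 v) + Br (shift al v) x)))%C.

Lemma theta_term_z_at al be P x t v :
  (qpow (Qr P) t * theta_term al be (0, t) (z_at x P t) v)%C = lattice_term al be P x t v.
Proof.
  destruct al as [a1 a2], be as [b1 b2], P as [P1 P2], x as [x1 x2], v as [v1 v2].
  unfold theta_term, lattice_term; rewrite !ee_polar.
  set (ph1 := Re (Bf _ _)); set (ph2 := Re (_ + _)%C); set (ga := Im (_ + _)%C).
  assert (E1 : Im (Bf (c2_of_R (b1, b2)) (c2_of_Z (v1, v2))) = 0)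
    by (unfold Bf, c2_of_R, c2_of_Z, RtoC, Cplus, Cmult, Im; simpl; ring).
  assert (E2 : ph1 = Br (b1, b2) (IZR2 (v1, v2)))
    by (unfold ph1, Bf, c2_of_R, c2_of_Z, RtoC, Cplus, Cmult, Re, Br, IZR2; simpl; ring).
  assert (E3 : ph2 = Br (shift (a1, a2) (v1, v2)) (x1, x2))
    by (unfold ph2, Bf, Qf, c2_of_R, c2_of_Z, c2_add, z_at, RtoC, Cplus, Cmult, Re, Br, shift;
        simpl; ring).
  assert (E4 : ga = t * (Qr (shift (sub2 (a1, a2) (P1, P2)) (v1, v2)) - Qr (P1, P2)))
    by (unfold ga, Bf, Qf, c2_of_R, c2_of_Z, c2_add, z_at, RtoC, Cplus, Cmult, Im, Qr, shift, sub2;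
        simpl; field).
  rewrite E1, E2, E3, E4, Rmult_0_r, Ropp_0, exp_0.
  replace (qpow (Qr (shift (sub2 (a1, a2) (P1, P2)) (v1, v2))) t)
    with (qpow (Qr (P1, P2)) t * exp (- (2 * PI * (t * (Qr (shift (sub2 (a1, a2) (P1, P2)) (v1, v2)) - Qr (P1, P2))))))
    by (unfold qpow; rewrite <- exp_plus; f_equal; ring).
  rewrite RtoC_mult, Rmult_plus_distr_l, <- cis_add.
  ring.
Qed.

Lemma Qr_ge_abs w : (Rabs (fst w) + Rabs (snd w)) / 2 - / 4 <= Qr w.
Proof.
  destruct w as [w1 w2]; unfold Qr; simpl.
  assert (E1 : Rabs w1 * Rabs w1 = w1 * w1) by (rewrite <- Rabs_mult; apply Rabs_pos_eq, Rle_0_sqr).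
  assert (E2 : Rabs w2 * Rabs w2 = w2 * w2) by (rewrite <- Rabs_mult; apply Rabs_pos_eq, Rle_0_sqr).
  pose proof (Rle_0_sqr (Rabs w1 - / 2)); pose proof (Rle_0_sqr (Rabs w2 - / 2)).
  pose proof (Rle_0_sqr (w1 + w2)); pose proof (Rle_0_sqr w2); unfold Rsqr in *.
  nra.
Qed.

Lemma sum_n_le_of_increments (f F : R -> R) B c M :
  (forall s, f s <= F (s + 1) - F s) -> (forall s, 0 <= F s <= B) ->
  sum_n (fun i => f (INR i + c)) M <= B.
Proof.
  intros Hf HF.
  assert (Htel : sum_n (fun i => f (INR i + c)) M <= F (INR M + 1 + c) - F c).
  { induction M as [|M IH].
    - rewrite sum_O; replace (INR 0 + 1 + c) with ((INR 0 + c) + 1) by ring.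
      replace c with (INR 0 + c) at 3 by (simpl; ring); apply Hf.
    - rewrite sum_Sn; change plus with Rplus.
      specialize (Hf (INR (S M) + c)); rewrite S_INR in *.
      replace (INR M + 1 + 1 + c) with (INR M + 1 + c + 1) by ring; lra. }
  pose proof (HF (INR M + 1 + c)); pose proof (HF c); lra.
Qed.

Definition exp_abs_sum_bound : R := 2 * exp PI / (exp PI - 1).

(* A bounded "primitive" of [s |-> exp (- PI |s|)] along unit steps, built from the two
   geometric series. *)
Definition exp_abs_potential (s : R) : R :=
  if Rle_dec s 0 then exp (PI * s) / (exp PI - 1)
  else exp_abs_sum_bound - exp (- (PI * s)) * exp PI / (exp PI - 1).

Lemma exp_PI_gt_1 : 1 < exp PI.
Proof. rewrite <- exp_0; apply exp_increasing, PI_RGT_0. Qed.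

Lemma exp_abs_potential_bounds s : 0 <= exp_abs_potential s <= exp_abs_sum_bound.
Proof.
  pose proof exp_PI_gt_1; pose proof PI_RGT_0.
  assert (HD : 0 < / (exp PI - 1)) by (apply Rinv_0_lt_compat; lra).
  unfold exp_abs_potential, exp_abs_sum_bound, Rdiv.
  destruct (Rle_dec s 0) as [Hs|Hs%Rnot_le_lt].
  - assert (exp (PI * s) <= 1) by (apply exp_le_1; nra).
    pose proof (exp_pos (PI * s)); split; nra.
  - assert (exp (- (PI * s)) <= 1) by (apply exp_le_1; nra).
    pose proof (exp_pos (- (PI * s))).
    assert (0 <= exp (- (PI * s)) * exp PI * / (exp PI - 1)) by (apply Rmult_le_pos; nra).
    split; nra.
Qed.

Lemma exp_abs_le_potential_step s :
  exp (- (PI * Rabs s)) <= exp_abs_potential (s + 1) - exp_abs_potential s.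
Proof.
  pose proof exp_PI_gt_1; pose proof PI_RGT_0.
  assert (HD : (exp PI - 1) * / (exp PI - 1) = 1) by (field; lra).
  assert (HD' : 0 < / (exp PI - 1)) by (apply Rinv_0_lt_compat; lra).
  assert (Hstep : forall u, exp (PI * (u + 1)) = exp (PI * u) * exp PI)
    by (intros; rewrite <- exp_plus; f_equal; ring).
  unfold exp_abs_potential, exp_abs_sum_bound, Rdiv.
  destruct (Rle_dec (s + 1) 0) as [h1|h1%Rnot_le_lt];
    destruct (Rle_dec s 0) as [h2|h2%Rnot_le_lt]; try lra.
  - rewrite Rabs_left by lra; rewrite Hstep, Ropp_mult_distr_r, Ropp_involutive.
    pose proof (exp_pos (PI * s)); nra.
  - assert (exp (- (PI * Rabs s)) <= 1) by (apply exp_le_1;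
      pose proof (Rabs_pos s); nra).
    assert (exp (PI * s) <= 1) by (apply exp_le_1; nra).
    assert (exp (- (PI * (s + 1))) <= 1) by (apply exp_le_1; nra).
    pose proof (exp_pos (PI * s)); pose proof (exp_pos (- (PI * (s + 1)))).
    assert (exp (- (PI * (s + 1))) * exp PI * / (exp PI - 1) <= exp PI * / (exp PI - 1)) by nra.
    assert (exp (PI * s) * / (exp PI - 1) <= / (exp PI - 1)) by nra.
    nra.
  - rewrite Rabs_right by lra.
    replace (exp (- (PI * s))) with (exp (- (PI * (s + 1))) * exp PI)
      by (rewrite <- exp_plus; f_equal; ring).
    pose proof (exp_pos (- (PI * (s + 1)))); pose proof (exp_pos PI).
    replace (2 * exp PI * / (exp PI - 1) - exp (- (PI * (s + 1))) * exp PI * / (exp PI - 1) -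
      (2 * exp PI * / (exp PI - 1) - exp (- (PI * (s + 1))) * exp PI * exp PI * / (exp PI - 1)))
      with (exp (- (PI * (s + 1))) * exp PI * ((exp PI - 1) * / (exp PI - 1))) by ring.
    rewrite HD; lra.
Qed.

Lemma sum_exp_abs_le c M :
  sum_n (fun i => exp (- (PI * Rabs (INR i + c)))) M <= exp_abs_sum_bound.
Proof.
  apply (sum_n_le_of_increments (fun s => exp (- (PI * Rabs s))) exp_abs_potential).
  - apply exp_abs_le_potential_step.
  - apply exp_abs_potential_bounds.
Qed.

Definition sum_square (f : Z * Z -> C) (N : nat) : C :=
  sum_n (fun i => sum_n (fun j =>
    f (Z.of_nat i - Z.of_nat N, Z.of_nat j - Z.of_nat N)%Z) (2 * N)) (2 * N).

Lemma sum_square_ext f g N : (forall v, f v = g v) -> sum_square f N = sum_square g N.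
Proof. intros H; unfold sum_square; apply sum_n_ext; intros; apply sum_n_ext; intros; apply H. Qed.

Lemma sum_square_plus f g N :
  sum_square (fun v => f v + g v)%C N = (sum_square f N + sum_square g N)%C.
Proof.
  unfold sum_square; change Cplus with (@plus C_AbelianMonoid).
  rewrite <- sum_n_plus; apply sum_n_ext; intros i; apply sum_n_plus.
Qed.

Lemma sum_square_scal (k : C) f N : (k * sum_square f N)%C = sum_square (fun v => k * f v)%C N.
Proof.
  unfold sum_square.
  rewrite <- (sum_n_mult_l (K := C_Ring)); apply sum_n_ext; intros i.
  rewrite <- (sum_n_mult_l (K := C_Ring)); reflexivity.
Qed.

Definition Zpair_eq_dec (u v : Z * Z) : {u = v} + {u <> v}.
Proof. decide equality; apply Z.eq_dec. Defined.

Definition in_box (N : nat) (s : Z * Z) : Prop :=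
  (- Z.of_nat N <= fst s <= Z.of_nat N)%Z /\ (- Z.of_nat N <= snd s <= Z.of_nat N)%Z.

Lemma sum_square_delta f s N : in_box N s ->
  sum_square (fun v => if Zpair_eq_dec v s then f v else 0%C) N = f s.
Proof.
  destruct s as [s1 s2]; intros [H1 H2]; simpl in H1, H2; unfold sum_square.
  rewrite (sum_n_single _ _ (Z.to_nat (s1 + Z.of_nat N))); [|lia|].
  - rewrite (sum_n_single _ _ (Z.to_nat (s2 + Z.of_nat N))); [|lia|].
    + rewrite !Z2Nat.id, !Z.add_simpl_r by lia.
      destruct (Zpair_eq_dec _ _) as [_|E]; [reflexivity|now contradict E].
    + intros k _ Hk; destruct (Zpair_eq_dec _ _) as [E|_]; [|reflexivity].
      injection E; lia.
  - intros k _ Hk; apply sum_n_zero.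
    intros j _; destruct (Zpair_eq_dec _ _) as [E|_]; [|reflexivity].
    injection E; lia.
Qed.

Definition sum_list (f : Z * Z -> C) (S : list (Z * Z)) : C :=
  fold_right (fun v acc => f v + acc)%C 0%C S.

Definition off_list (S : list (Z * Z)) (f : Z * Z -> C) (v : Z * Z) : C :=
  if in_dec Zpair_eq_dec v S then 0%C else f v.

Lemma sum_square_split f S N : NoDup S -> (forall s, In s S -> in_box N s) ->
  sum_square f N = (sum_list f S + sum_square (off_list S f) N)%C.
Proof.
  revert f; induction S as [|s S IH]; intros f HS HB.
  - simpl; rewrite Cplus_0_l; apply sum_square_ext; reflexivity.
  - inversion HS as [|? ? Hs HS']; subst.
    set (g v := if Zpair_eq_dec v s then RtoC 0 else f v).
    rewrite (sum_square_ext f (fun v => (if Zpair_eq_dec v s then f v else RtoC 0) + g v)%C)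
      by (intros v; unfold g; destruct (Zpair_eq_dec v s); ring).
    rewrite sum_square_plus, sum_square_delta, (IH g)
      by first [assumption | apply HB; left; reflexivity | intros ? ?; apply HB; right; assumption].
    simpl; rewrite Cplus_assoc; f_equal; [f_equal|].
    + clear -Hs; induction S as [|s' S IHS]; [reflexivity|].
      simpl; f_equal.
      * unfold g; destruct (Zpair_eq_dec s' s) as [->|]; [|reflexivity].
        exfalso; apply Hs; left; reflexivity.
      * apply IHS; intros H; apply Hs; right; exact H.
    + apply sum_square_ext; intros v; unfold off_list, g; simpl.
      destruct (Zpair_eq_dec s v), (Zpair_eq_dec v s), (in_dec Zpair_eq_dec v S); subst;
        try reflexivity; congruence.
Qed.

Lemma Cmod_lattice_term_le al be P x t mu v : 1 <= t ->
  mu <= Qr (shift (sub2 al P) v) ->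
  Cmod (lattice_term al be P x t v) <=
    exp (PI / 2) * exp (2 * PI * mu) * qpow mu t *
    (exp (- (PI * Rabs (fst (shift (sub2 al P) v)))) * exp (- (PI * Rabs (snd (shift (sub2 al P) v))))).
Proof.
  intros Ht Hmu; unfold lattice_term, qpow.
  rewrite Cmod_mult, Cmod_cis, Cmod_R, Rabs_pos_eq, Rmult_1_r, <- !exp_plus by (left; apply exp_pos).
  apply exp_le_exp.
  pose proof (Qr_ge_abs (shift (sub2 al P) v)); pose proof PI_RGT_0.
  set (Q := Qr _) in *; set (a1 := Rabs (fst _)) in *; set (a2 := Rabs (snd _)) in *.
  (* [t Q = (t - 1) Q + Q]: the first part gives the decay [q^mu], the second the summability *)
  assert (0 <= (t - 1) * (Q - mu)) by (apply Rmult_le_pos; lra).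
  nra.
Qed.

Lemma Cmod_sum_square_le h N : Cmod (sum_square h N) <=
  sum_n (fun i => sum_n (fun j =>
    Cmod (h (Z.of_nat i - Z.of_nat N, Z.of_nat j - Z.of_nat N)%Z)) (2 * N)) (2 * N).
Proof.
  eapply Rle_trans; [apply Cmod_sum_n_le|].
  apply sum_n_m_le; intros i; apply Cmod_sum_n_le.
Qed.

Lemma Cmod_lattice_tail_le al be P x t mu S N : 1 <= t ->
  (forall v, ~ In v S -> mu <= Qr (shift (sub2 al P) v)) ->
  Cmod (sum_square (off_list S (lattice_term al be P x t)) N) <=
    exp (PI / 2) * exp (2 * PI * mu) * qpow mu t * exp_abs_sum_bound ^ 2.
Proof.
  intros Ht HS.
  set (D := exp (PI / 2) * exp (2 * PI * mu) * qpow mu t).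
  assert (HD : 0 < D) by (unfold D; pose proof (qpow_pos mu t);
    pose proof (exp_pos (PI / 2)); pose proof (exp_pos (2 * PI * mu)); repeat apply Rmult_lt_0_compat; lra).
  set (a := fun i : nat => exp (- (PI * Rabs (INR i + (fst al - fst P - INR N))))).
  set (b := fun j : nat => exp (- (PI * Rabs (INR j + (snd al - snd P - INR N))))).
  eapply Rle_trans; [apply Cmod_sum_square_le|].
  apply Rle_trans with (D * (sum_n a (2 * N) * sum_n b (2 * N))).
  - rewrite <- sum_n_mult_sum_n, <- (sum_n_mult_l (K := R_Ring)).
    apply sum_n_m_le; intros i; rewrite <- (sum_n_mult_l (K := R_Ring)).
    apply sum_n_m_le; intros j; change (mult D ?u) with (D * u).
    set (v := (Z.of_nat i - Z.of_nat N, Z.of_nat j - Z.of_nat N)%Z).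
    unfold off_list; destruct (in_dec Zpair_eq_dec v S) as [_|Hv].
    + rewrite Cmod_0; apply Rmult_le_pos; [lra|].
      unfold a, b; apply Rmult_le_pos; left; apply exp_pos.
    + eapply Rle_trans; [apply (Cmod_lattice_term_le _ _ _ _ _ mu v Ht (HS v Hv))|].
      unfold a, b, v, shift, sub2; simpl; rewrite !minus_IZR, <- !INR_IZR_INZ.
      replace (fst al - fst P + (INR i - INR N)) with (INR i + (fst al - fst P - INR N)) by ring.
      replace (snd al - snd P + (INR j - INR N)) with (INR j + (snd al - snd P - INR N)) by ring.
      apply Rle_refl.
  - pose proof (sum_exp_abs_le (fst al - fst P - INR N) (2 * N)).
    pose proof (sum_exp_abs_le (snd al - snd P - INR N) (2 * N)).
    assert (0 <= sum_n a (2 * N)) by (apply sum_n_nonneg; intros; left; apply exp_pos).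
    assert (0 <= sum_n b (2 * N)) by (apply sum_n_nonneg; intros; left; apply exp_pos).
    apply Rmult_le_compat_l; [lra|]; replace (exp_abs_sum_bound ^ 2) with (exp_abs_sum_bound * exp_abs_sum_bound) by ring.
    apply Rmult_le_compat; assumption.
Qed.

Lemma real_Lim_seq_bounds (u : nat -> R) l h :
  (forall N, (1 <= N)%nat -> l <= u N <= h) -> l <= real (Lim_seq u) <= h.
Proof.
  intros H.
  assert (H1 : Rbar_le (Lim_seq (fun _ => l)) (Lim_seq u))
    by (apply Lim_seq_le_loc; exists 1%nat; intros n Hn; apply H, Hn).
  assert (H2 : Rbar_le (Lim_seq u) (Lim_seq (fun _ => h)))
    by (apply Lim_seq_le_loc; exists 1%nat; intros n Hn; apply H, Hn).
  rewrite Lim_seq_const in H1, H2.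
  destruct (Lim_seq u); simpl in *; try contradiction; lra.
Qed.

Lemma Cmod_le_of_Re_Im z T : Rabs (Re z) <= T -> Rabs (Im z) <= T -> Cmod z <= 2 * T.
Proof.
  intros H1 H2; unfold Re, Im in *; eapply Rle_trans; [apply Cmod_2Rmax|].
  assert (Rmax (Rabs (fst z)) (Rabs (snd z)) <= T) by (apply Rmax_lub; auto).
  assert (sqrt 2 <= 2) by (rewrite <- (sqrt_square 2) at 2 by lra; apply sqrt_le_1_alt; lra).
  pose proof (sqrt_pos 2); pose proof (Rle_trans _ _ _ (Rabs_pos _) (Rmax_l (Rabs (fst z)) (Rabs (snd z)))).
  nra.
Qed.

Lemma Cmod_lim_sub_le (u : nat -> C) (M : C) T :
  (forall N, (1 <= N)%nat -> Cmod (u N - M) <= T) ->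
  Cmod ((real (Lim_seq (fun N => Re (u N))), real (Lim_seq (fun N => Im (u N)))) - M)%C <= 2 * T.
Proof.
  intros H.
  assert (HRe : Re M - T <= real (Lim_seq (fun N => Re (u N))) <= Re M + T).
  { apply real_Lim_seq_bounds; intros N HN.
    pose proof (Rle_trans _ _ _ (re_le_Cmod _) (H N HN)) as HR.
    apply Rabs_le_between in HR; unfold Cminus, Cplus, Copp, Re in *; simpl in *; lra. }
  assert (HIm : Im M - T <= real (Lim_seq (fun N => Im (u N))) <= Im M + T).
  { apply real_Lim_seq_bounds; intros N HN.
    pose proof (Rle_trans _ _ _ (Rle_trans _ _ _ (Rmax_r _ _) (Rmax_Cmod _)) (H N HN)) as HI.
    apply Rabs_le_between in HI; unfold Cminus, Cplus, Copp, Im in *; simpl in *; lra. }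
  apply Cmod_le_of_Re_Im; apply Rabs_le; unfold Cminus, Cplus, Copp, Re, Im in *; simpl; lra.
Qed.

Definition Ktail : R := 2 * exp (PI / 2) * exp_abs_sum_bound ^ 2.

Lemma theta_near_lattice_sum al be P x S mu t : 1 <= t -> NoDup S ->
  (forall s, In s S -> in_box 1 s) ->
  (forall v, ~ In v S -> mu <= Qr (shift (sub2 al P) v)) ->
  Cmod (qpow (Qr P) t * theta al be (0, t) (z_at x P t) - sum_list (lattice_term al be P x t) S)%C
    <= Ktail * exp (2 * PI * mu) * qpow mu t.
Proof.
  intros Ht HND HB HS.
  set (k := qpow (Qr P) t); pose proof (qpow_pos (Qr P) t) as Hk; fold k in Hk.
  set (L := sum_list _ S).
  set (T := exp (PI / 2) * exp (2 * PI * mu) * qpow mu t * exp_abs_sum_bound ^ 2).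
  assert (Hpartial : forall N, (1 <= N)%nat ->
    Cmod (theta_partial al be (0, t) (z_at x P t) N - / k * L)%C <= / k * T).
  { intros N HN.
    assert (Hsplit : (k * theta_partial al be (0, t) (z_at x P t) N)%C =
      (L + sum_square (off_list S (lattice_term al be P x t)) N)%C).
    { unfold theta_partial; fold (sum_square (theta_term al be (0, t) (z_at x P t)) N).
      rewrite sum_square_scal, (sum_square_ext _ (lattice_term al be P x t))
        by (intros; apply theta_term_z_at).
      apply sum_square_split; [assumption|].
      intros s Hs; destruct (HB s Hs) as [H1 H2]; split; lia. }
    replace (theta_partial al be (0, t) (z_at x P t) N - / k * L)%C
      with (/ k * (k * theta_partial al be (0, t) (z_at x P t) N - L))%C
      by (field; intros E; injection E; lra).
    rewrite Hsplit, Cmod_mult, <- RtoC_inv, Cmod_R, Rabs_pos_eq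
      by first [lra | left; apply Rinv_0_lt_compat, Hk].
    replace (L + _ - L)%C with (sum_square (off_list S (lattice_term al be P x t)) N) by ring.
    apply Rmult_le_compat_l; [left; apply Rinv_0_lt_compat, Hk|].
    now apply Cmod_lattice_tail_le. }
  pose proof (Cmod_lim_sub_le _ _ _ Hpartial) as Hlim.
  replace (k * theta al be (0, t) (z_at x P t) - L)%C
    with (k * (theta al be (0, t) (z_at x P t) - / k * L))%C
    by (field; intros E; injection E; lra).
  rewrite Cmod_mult, Cmod_R, Rabs_pos_eq by lra.
  apply Rle_trans with (k * (2 * (/ k * T))); [apply Rmult_le_compat_l; [lra|exact Hlim]|].
  apply Req_le; unfold T, Ktail; field; lra.
Qed.

(** * Lattice points near the characteristics *)

Lemma Qr_decomp w1 w2 : Qr (w1, w2) = (w1 + w2 / 2) ^ 2 + 15 / 4 * w2 ^ 2.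
Proof. unfold Qr; simpl; field. Qed.

Lemma sqr_ge_of_abs_ge a y : 0 <= a -> a <= y \/ y <= - a -> a * a <= y ^ 2.
Proof. intros H [H1|H1]; nra. Qed.

Lemma IZR_far (v m : Z) : v <> m -> IZR m + 1 <= IZR v \/ IZR v <= IZR m - 1.
Proof.
  intros H; destruct (Z.lt_ge_cases v m) as [Hl|Hl]; [right|left].
  - rewrite <- minus_IZR; apply IZR_le; lia.
  - rewrite <- plus_IZR; apply IZR_le; lia.
Qed.

Definition self_support : list (Z * Z) := ((0, 0) :: (1, 0) :: (-1, 0) :: nil)%Z.

Lemma self_lattice al v : ~ In v self_support -> 3 <= Qr (shift (sub2 al al) v).
Proof.
  intros Hv; destruct v as [v1 v2].
  replace (shift (sub2 al al) (v1, v2)) with (IZR v1, IZR v2)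
    by (unfold shift, sub2; simpl; f_equal; ring).
  rewrite Qr_decomp; pose proof (pow2_ge_0 (IZR v1 + IZR v2 / 2)).
  destruct (Z.eq_dec v2 0) as [->|E].
  - assert (H1 : v1 <> 1%Z) by (intros ->; apply Hv; simpl; auto).
    assert (H2 : v1 <> (-1)%Z) by (intros ->; apply Hv; simpl; auto).
    assert (H0 : v1 <> 0%Z) by (intros ->; apply Hv; simpl; auto).
    assert (2 <= IZR v1 \/ IZR v1 <= -2).
    { destruct (Z.lt_ge_cases v1 0); [right|left]; [apply (IZR_le _ (-2))|apply (IZR_le 2)]; lia. }
    pose proof (sqr_ge_of_abs_ge 2 (IZR v1 + IZR 0 / 2) ltac:(lra) ltac:(simpl; lra)).
    pose proof (pow2_ge_0 (IZR 0)); lra.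
  - pose proof (IZR_far v2 0 E); simpl in *.
    pose proof (sqr_ge_of_abs_ge 1 (IZR v2) ltac:(lra) ltac:(lra)); lra.
Qed.

Definition pair_support (k s : Z) : list (Z * Z) := ((k, s) :: (k + 1, s) :: nil)%Z.

(* [d] stands for [alpha - alpha0]: the two lattice points of [pair_support k s] are the
   nearest ones to [-d], both at [Q = 2/5]. *)
Definition pair_offset (d : R * R) (k s : Z) (eps : R) : Prop :=
  (eps = 1/5 \/ eps = -1/5) /\ snd d + IZR s = eps /\ fst d + IZR k + eps / 2 = -1/2 /\
  (-1 <= k <= 0)%Z /\ (-1 <= s <= 1)%Z.

Lemma pair_lattice d k s eps v : pair_offset d k s eps ->
  ~ In v (pair_support k s) -> 1 <= Qr (shift d v).
Proof.
  intros (He & Hs & Hk & _ & _) Hv; destruct v as [v1 v2]; unfold shift; simpl fst; simpl snd.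
  rewrite Qr_decomp.
  destruct (Z.eq_dec v2 s) as [->|E].
  - assert (Hv1 : IZR v1 <= IZR k - 1 \/ IZR k + 2 <= IZR v1).
    { destruct (Z_le_gt_dec v1 (k - 1)) as [h|h]; [left; rewrite <- minus_IZR; now apply IZR_le|].
      destruct (Z_le_gt_dec (k + 2) v1) as [h'|h']; [right; rewrite <- plus_IZR; now apply IZR_le|].
      exfalso; apply Hv; assert (v1 = k \/ v1 = k + 1)%Z as [->| ->] by lia; simpl; auto. }
    pose proof (sqr_ge_of_abs_ge 1 (fst d + IZR v1 + (snd d + IZR s) / 2) ltac:(lra) ltac:(lra)).
    pose proof (pow2_ge_0 (snd d + IZR s)); lra.
  - pose proof (IZR_far v2 s E).
    pose proof (sqr_ge_of_abs_ge (4/5) (snd d + IZR v2) ltac:(lra) ltac:(lra)).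
    pose proof (pow2_ge_0 (fst d + IZR v1 + (snd d + IZR v2) / 2)); lra.
Qed.

Lemma pair_lattice_min d k s eps : pair_offset d k s eps ->
  Qr (shift d (k, s)) = 2/5 /\ Qr (shift d (k + 1, s)%Z) = 2/5.
Proof.
  intros (He & Hs & Hk & _ & _); unfold shift; simpl fst; simpl snd.
  rewrite plus_IZR, !Qr_decomp, Hs.
  replace (fst d + IZR k) with (-1/2 - eps / 2) by lra.
  replace (fst d + (IZR k + 1)) with (1/2 - eps / 2) by lra.
  destruct He as [-> | ->]; split; field.
Qed.

Definition none_offset (d : R * R) (m : Z) (eps : R) : Prop :=
  (eps = 2/5 \/ eps = -2/5) /\ snd d + IZR m = eps.

Lemma none_lattice d m eps v : none_offset d m eps -> 1/2 <= Qr (shift d v).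
Proof.
  intros [He Hm]; destruct v as [v1 v2]; unfold shift; simpl fst; simpl snd.
  rewrite Qr_decomp.
  assert (Hv : 2/5 <= snd d + IZR v2 \/ snd d + IZR v2 <= - (2/5)).
  { destruct (Z.eq_dec v2 m) as [->|E]; [destruct He; lra|].
    pose proof (IZR_far v2 m E); destruct He; lra. }
  pose proof (sqr_ge_of_abs_ge (2/5) _ ltac:(lra) Hv).
  pose proof (pow2_ge_0 (fst d + IZR v1 + (snd d + IZR v2) / 2)); lra.
Qed.

Lemma alpha_offsets a0 a : (a0 <= 4)%nat -> (a <= 4)%nat -> a <> a0 ->
  (exists k s eps, pair_offset (sub2 (alpha_of a) (alpha_of a0)) k s eps) \/
  (exists m eps, none_offset (sub2 (alpha_of a) (alpha_of a0)) m eps).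
Proof.
  intros Ha0 Ha Hne.
  destruct a0 as [|[|[|[|[|a0]]]]]; destruct a as [|[|[|[|[|a]]]]]; try lia;
    unfold pair_offset, none_offset, sub2, alpha_of; simpl fst; simpl snd;
    first
    [ left; (exists (-1)%Z + exists 0%Z); (exists (-1)%Z + exists 0%Z + exists 1%Z);
      (exists (1/5) + exists (-1/5));
      split; [lra|split; [simpl; lra|split; [simpl; lra|lia]]]
    | right; (exists (-1)%Z + exists 0%Z + exists 1%Z); (exists (2/5) + exists (-2/5));
      split; [lra|simpl; lra] ].
Qed.

Definition x_dual (phi th : R) : R * R := ((8 * phi - th) / 15, (2 * th - phi) / 15).

Lemma Br_x_dual p phi th : Br p (x_dual phi th) = fst p * phi + snd p * th.
Proof. unfold Br, x_dual; simpl; field. Qed.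

Definition gauge (al : R * R) (phi th : R) : C := cis (2 * PI * (fst al * phi + snd al * th)).

Definition rho (al : R * R) : C := cis (5 * (PI * snd al)).

Lemma Cmod_rho al : Cmod (rho al) = 1.
Proof. apply Cmod_cis. Qed.

Lemma gauge_half al phi : Cpow5 (gauge al phi (1/2)) = (rho al * Cpow5 (gauge al phi 0))%C.
Proof.
  unfold gauge, rho; rewrite !Cpow5_Cpow, !Cpow_cis, cis_add; f_equal; simpl; field.
Qed.

Lemma self_main_terms al b phi t th :
  sum_list (lattice_term al (beta_of b) al (x_dual phi th) t) self_support =
  (gauge al phi th * (1 + qpow 1 t * neighbour_sum b phi))%C.
Proof.
  unfold sum_list, self_support, lattice_term, neighbour_sum, gauge; simpl fold_right.
  rewrite !Br_x_dual.
  replace (Qr (shift (sub2 al al) (0, 0)%Z)) with 0 by (unfold Qr, shift, sub2; simpl; ring).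
  replace (Qr (shift (sub2 al al) (1, 0)%Z)) with 1 by (unfold Qr, shift, sub2; simpl; ring).
  replace (Qr (shift (sub2 al al) (-1, 0)%Z)) with 1 by (unfold Qr, shift, sub2; simpl; ring).
  rewrite qpow_0.
  unfold beta_of, IZR2, shift, Br; simpl fst; simpl snd.
  set (g := fst al * phi + snd al * th).
  set (y := 2 * INR b / 5 + phi).
  replace (2 * (INR b / 5) * 0 + INR b / 5 * 0 + 0 * 0 + 8 * 0 * 0 + ((fst al + 0) * phi + (snd al + 0) * th))
    with g by (unfold g; ring).
  replace (2 * (INR b / 5) * 1 + INR b / 5 * 0 + 0 * 1 + 8 * 0 * 0 + ((fst al + 1) * phi + (snd al + 0) * th))
    with (g + y) by (unfold g, y; field).
  replace (2 * (INR b / 5) * -1 + INR b / 5 * 0 + 0 * -1 + 8 * 0 * 0 + ((fst al + -1) * phi + (snd al + 0) * th))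
    with (g + - y) by (unfold g, y; field).
  rewrite !Rmult_plus_distr_l, <- !cis_add, Ropp_mult_distr_r.
  ring.
Qed.

Definition pair_phase (al : R * R) (k s : Z) (b : nat) (phi th : R) : C :=
  (cis (2 * PI * (Br (beta_of b) (IZR2 (k, s)) + Br (shift al (k, s)) (x_dual phi th))) +
   cis (2 * PI * (Br (beta_of b) (IZR2 (k + 1, s)%Z) + Br (shift al (k + 1, s)%Z) (x_dual phi th))))%C.

Lemma Cmod_pair_phase_le al k s b phi th : Cmod (pair_phase al k s b phi th) <= 2.
Proof. unfold pair_phase; eapply Rle_trans; [apply Cmod_triangle|]; rewrite !Cmod_cis; lra. Qed.

Lemma pair_main_terms al al0 k s eps b phi t th : pair_offset (sub2 al al0) k s eps ->
  sum_list (lattice_term al (beta_of b) al0 (x_dual phi th) t) (pair_support k s) =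
  (qpow (2/5) t * pair_phase al k s b phi th)%C.
Proof.
  intros Hp; destruct (pair_lattice_min _ _ _ _ Hp) as [Q0 Q1].
  unfold sum_list, pair_support, lattice_term, pair_phase; simpl fold_right.
  rewrite Q0, Q1; ring.
Qed.

(* Both support points have second coordinate [snd al0 + eps], and [5 eps = 1] or [-1]. *)
Lemma pair_phase_half al al0 k s eps b phi : pair_offset (sub2 al al0) k s eps ->
  Cpow5 (pair_phase al k s b phi (1/2)) = (- rho al0 * Cpow5 (pair_phase al k s b phi 0))%C.
Proof.
  intros (He & Hs & _); unfold pair_phase, rho, sub2 in *; simpl snd in Hs.
  rewrite !Br_x_dual; unfold shift; simpl fst; simpl snd.
  set (p2 := snd al + IZR s).
  assert (Hshift : forall B p1, cis (2 * PI * (B + (p1 * phi + p2 * (1/2)))) =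
    (cis (2 * PI * (B + (p1 * phi + p2 * 0))) * cis (PI * p2))%C)
    by (intros; rewrite cis_add; f_equal; field).
  rewrite !Hshift, <- Cmult_plus_distr_r, !Cpow5_Cpow, Cpow_mult_l, Cpow_cis.
  replace (INR 5 * (PI * p2)) with (5 * (PI * snd al0) + 5 * eps * PI) by (unfold p2; simpl; nra).
  destruct He as [-> | ->].
  - replace (5 * (PI * snd al0) + 5 * (1/5) * PI) with (5 * (PI * snd al0) + PI) by field.
    rewrite cis_add_PI; ring.
  - replace (5 * (PI * snd al0) + 5 * (-1/5) * PI) with (5 * (PI * snd al0) - PI) by field.
    rewrite <- (cis_add_2PI_mult (5 * (PI * snd al0) - PI) 1).
    replace (5 * (PI * snd al0) - PI + 2 * INR 1 * PI) with (5 * (PI * snd al0) + PI) by (simpl; ring).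
    rewrite cis_add_PI; ring.
Qed.

Definition ntheta (a0 a b : nat) (phi t th : R) : C :=
  (qpow (Qr (alpha_of a0)) t *
   theta (alpha_of a) (beta_of b) (0, t) (z_at (x_dual phi th) (alpha_of a0) t))%C.

Definition Kapprox : R := Ktail * exp (2 * PI * 3).

Lemma Ktail_exp_le mu : mu <= 3 -> Ktail * exp (2 * PI * mu) <= Kapprox.
Proof.
  intros Hmu; unfold Kapprox; apply Rmult_le_compat_l.
  - unfold Ktail; pose proof (exp_pos (PI / 2)); pose proof (pow2_ge_0 exp_abs_sum_bound); nra.
  - apply exp_le_exp; pose proof PI_RGT_0; nra.
Qed.

Lemma Kapprox_ge_0 : 0 <= Kapprox.
Proof.
  apply Rle_trans with (Ktail * exp (2 * PI * 0)); [|apply Ktail_exp_le; lra].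
  unfold Ktail; rewrite Rmult_0_r, exp_0; pose proof (exp_pos (PI / 2)).
  pose proof (pow2_ge_0 exp_abs_sum_bound); nra.
Qed.

Lemma ntheta_self_approx a0 b phi t th : 1 <= t ->
  Cmod (ntheta a0 a0 b phi t th -
        gauge (alpha_of a0) phi th * (1 + qpow 1 t * neighbour_sum b phi)) <= Kapprox * qpow 3 t.
Proof.
  intros Ht; rewrite <- self_main_terms; eapply Rle_trans.
  - apply theta_near_lattice_sum; [exact Ht| | |apply self_lattice].
    + repeat constructor; simpl; intuition discriminate.
    + intros s Hs; repeat destruct Hs as [<-|Hs]; try destruct Hs; split; simpl; lia.
  - apply Rmult_le_compat_r; [left; apply qpow_pos|apply Ktail_exp_le; lra].
Qed.

Lemma ntheta_pair_approx a0 a k s eps b phi t th :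
  pair_offset (sub2 (alpha_of a) (alpha_of a0)) k s eps -> 1 <= t ->
  Cmod (ntheta a0 a b phi t th - qpow (2/5) t * pair_phase (alpha_of a) k s b phi th) <= Kapprox * qpow 1 t.
Proof.
  intros Hp Ht; rewrite <- (pair_main_terms _ _ _ _ _ _ _ _ _ Hp); eapply Rle_trans.
  - pose proof Hp as (_ & _ & _ & Hkr & Hsr).
    apply theta_near_lattice_sum; [exact Ht| | |intros v Hv; exact (pair_lattice _ _ _ _ _ Hp Hv)].
    + constructor; [simpl; intros [E|[]]; injection E; lia|].
      constructor; [simpl; tauto|constructor].
    + intros v [<-|[<-|[]]]; split; simpl; lia.
  - apply Rmult_le_compat_r; [left; apply qpow_pos|apply Ktail_exp_le; lra].
Qed.

Lemma ntheta_none_bound a0 a m eps b phi t th :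
  none_offset (sub2 (alpha_of a) (alpha_of a0)) m eps -> 1 <= t ->
  Cmod (ntheta a0 a b phi t th) <= Kapprox * qpow (1/2) t.
Proof.
  intros Hn Ht.
  replace (ntheta a0 a b phi t th) with (ntheta a0 a b phi t th - 0)%C by ring.
  eapply Rle_trans.
  - apply (theta_near_lattice_sum _ _ _ _ nil); [exact Ht|constructor|intros _ []|].
    intros v _; exact (none_lattice _ _ _ v Hn).
  - apply Rmult_le_compat_r; [left; apply qpow_pos|apply Ktail_exp_le; lra].
Qed.

Section Coefficients.

Variable c : nat -> nat -> C.

Definition nrow (a0 a : nat) (phi t th : R) : C :=
  row (c a) (fun b => ntheta a0 a b phi t th).

Definition Krow : R := 5 * (3 + Kapprox) ^ 4 * Kapprox.

Lemma Cmod_nrow_sub_le a0 a phi t th (M : nat -> C) e r : 1 <= t -> 0 <= r <= e -> 5/2 <= 4 * r + e ->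
  (forall b, Cmod (ntheta a0 a b phi t th - M b) <= Kapprox * qpow e t) ->
  (forall b, Cmod (M b) <= 3 * qpow r t) ->
  Cmod (nrow a0 a phi t th - row (c a) M) <= l1 (c a) * (Krow * qpow (5/2) t).
Proof.
  intros Ht Hre He HF HM; apply Cmod_row_sub_le; intros b.
  unfold Krow.
  exact (Cmod_Cpow5_sub_le _ _ _ _ _ _ Ht Kapprox_ge_0 Hre He (HF b) (HM b)).
Qed.

Lemma nrow_twisted_other a0 a phi t : (a0 <= 4)%nat -> (a <= 4)%nat -> a <> a0 -> 1 <= t ->
  Cmod (rho (alpha_of a0) * nrow a0 a phi t 0 + nrow a0 a phi t (1/2)) <=
    2 * (l1 (c a) * (Krow * qpow (5/2) t)).
Proof.
  intros Ha0 Ha Hne Ht.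
  destruct (alpha_offsets a0 a Ha0 Ha Hne) as [(k & s & eps & Hp)|(m & eps & Hn)].
  - set (M th b := (qpow (2/5) t * pair_phase (alpha_of a) k s b phi th)%C).
    assert (HY : (rho (alpha_of a0) * row (c a) (M 0) + row (c a) (M (1/2)%R))%C = 0%C).
    { rewrite (row_scale _ (M 0) (M (1/2)%R) (- rho (alpha_of a0))); [ring|].
      intros b; unfold M; rewrite !Cpow5_Cpow, !Cpow_mult_l, <- !Cpow5_Cpow.
      rewrite (pair_phase_half _ _ _ _ _ _ _ Hp); ring. }
    assert (HM : forall th b, Cmod (M th b) <= 3 * qpow (2/5) t).
    { intros th b; unfold M; rewrite Cmod_mult, Cmod_qpow; pose proof (qpow_pos (2/5) t).
      pose proof (Cmod_pair_phase_le (alpha_of a) k s b phi th); nra. }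
    eapply Rle_trans;
      [|apply (Cmod_twisted_sum_le _ (nrow a0 a phi t 0) (nrow a0 a phi t (1/2)) _ _ _ _ (Cmod_rho _) HY)];
      [apply Req_le; f_equal; ring| |];
      apply (Cmod_nrow_sub_le _ _ _ _ _ _ 1 (2/5)); try lra; try apply HM;
      intros b; exact (ntheta_pair_approx _ _ _ _ _ _ _ _ _ Hp Ht).
  - assert (HY : (rho (alpha_of a0) * row (c a) (fun _ => 0%C) + row (c a) (fun _ => 0%C))%C = 0%C)
      by (unfold row, Cpow5; rewrite !sum_Sn, !sum_O; change plus with Cplus; ring).
    eapply Rle_trans;
      [|apply (Cmod_twisted_sum_le _ (nrow a0 a phi t 0) (nrow a0 a phi t (1/2)) _ _ _ _ (Cmod_rho _) HY)];
      [apply Req_le; f_equal; ring| |];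
      apply (Cmod_nrow_sub_le _ _ _ _ _ _ (1/2) (1/2)); try lra.
    + intros b; replace (ntheta a0 a b phi t 0 - 0)%C with (ntheta a0 a b phi t 0) by ring.
      exact (ntheta_none_bound _ _ _ _ _ _ _ _ Hn Ht).
    + intros b; rewrite Cmod_0; pose proof (qpow_pos (1/2) t); lra.
    + intros b; replace (ntheta a0 a b phi t (1/2) - 0)%C with (ntheta a0 a b phi t (1/2)) by ring.
      exact (ntheta_none_bound _ _ _ _ _ _ _ _ Hn Ht).
    + intros b; rewrite Cmod_0; pose proof (qpow_pos (1/2) t); lra.
Qed.

Lemma nrow_twisted_self a0 phi t : 1 <= t ->
  Cmod (rho (alpha_of a0) * nrow a0 a0 phi t 0 + nrow a0 a0 phi t (1/2) -
        2 * rho (alpha_of a0) * Cpow5 (gauge (alpha_of a0) phi 0) *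
        row (c a0) (fun b => (1 + qpow 1 t * neighbour_sum b phi)%C)) <=
    2 * (l1 (c a0) * (Krow * qpow (5/2) t)).
Proof.
  intros Ht.
  set (T := row (c a0) (fun b => (1 + qpow 1 t * neighbour_sum b phi)%C)).
  set (M th b := (gauge (alpha_of a0) phi th * (1 + qpow 1 t * neighbour_sum b phi))%C).
  assert (HT : forall th, row (c a0) (M th) = (Cpow5 (gauge (alpha_of a0) phi th) * T)%C).
  { intros th; apply row_scale; intros b; unfold M; rewrite !Cpow5_Cpow; apply Cpow_mult_l. }
  assert (HM : forall th b, Cmod (M th b) <= 3 * qpow 0 t).
  { intros th b; unfold M, gauge; rewrite Cmod_mult, Cmod_cis, Rmult_1_l.
    rewrite qpow_0.
    eapply Rle_trans; [apply Cmod_triangle|]; rewrite Cmod_1, Cmod_mult, Cmod_qpow.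
    assert (Cmod (neighbour_sum b phi) <= 2)
      by (unfold neighbour_sum; eapply Rle_trans; [apply Cmod_triangle|]; rewrite !Cmod_cis; lra).
    pose proof (qpow_le_1 1 t ltac:(lra) ltac:(lra)); pose proof (qpow_pos 1 t).
    pose proof (Cmod_ge_0 (neighbour_sum b phi)); nra. }
  apply Cmod_twisted_sum_le with (Y0 := row (c a0) (M 0)) (Y1 := row (c a0) (M (1/2)%R)).
  - apply Cmod_rho.
  - rewrite !HT, gauge_half; ring.
  - apply (Cmod_nrow_sub_le _ _ _ _ _ _ 3 0); try lra; [|apply HM].
    intros b; apply ntheta_self_approx, Ht.
  - apply (Cmod_nrow_sub_le _ _ _ _ _ _ 3 0); try lra; [|apply HM].
    intros b; apply ntheta_self_approx, Ht.
Qed.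

Hypothesis Hc : forall (tau : C) (z : C2), 0 < Im tau ->
  sum_n (fun a => sum_n (fun b =>
    Cmult (c a b) (Cpow5 (theta (alpha_of a) (beta_of b) tau z))) 4) 4 = RtoC 0.

Lemma nrows_sum_eq_0 a0 phi t th : 1 <= t -> sum_n (fun a => nrow a0 a phi t th) 4 = 0 :> C.
Proof.
  intros Ht.
  pose proof (Hc (0, t) (z_at (x_dual phi th) (alpha_of a0) t) ltac:(simpl; lra)) as H.
  set (k := RtoC (qpow (Qr (alpha_of a0)) t)).
  transitivity (Cpow5 k * sum_n (fun a => sum_n (fun b =>
       Cmult (c a b) (Cpow5 (theta (alpha_of a) (beta_of b) (0, t)
         (z_at (x_dual phi th) (alpha_of a0) t)))) 4) 4)%C.
  - unfold nrow, row, ntheta; fold k; rewrite !sum_Sn, !sum_O; cbv beta.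
    rewrite !sum_Sn, !sum_O; change plus with Cplus.
    unfold Cpow5; ring.
  - rewrite H; apply Cmult_0_r.
Qed.

Lemma self_row_small a0 phi t : (a0 <= 4)%nat -> 1 <= t ->
  Cmod (row (c a0) (fun b => (1 + qpow 1 t * neighbour_sum b phi)%C)) <=
    sum_n (fun a => l1 (c a)) 4 * Krow * qpow (5/2) t.
Proof.
  intros Ha0 Ht.
  set (T := row (c a0) _).
  set (r := rho (alpha_of a0)).
  set (W a := (r * nrow a0 a phi t 0 + nrow a0 a phi t (1/2))%C).
  assert (HW : sum_n W 4 = 0 :> C).
  { transitivity (r * sum_n (fun a => nrow a0 a phi t 0) 4 + sum_n (fun a => nrow a0 a phi t (1/2)) 4)%C.
    - unfold W; rewrite !sum_Sn, !sum_O; change plus with Cplus; ring.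
    - rewrite !nrows_sum_eq_0 by assumption; ring. }
  set (X := (2 * r * Cpow5 (gauge (alpha_of a0) phi 0) * T)%C).
  assert (HXT : Cmod X = 2 * Cmod T).
  { unfold X, r, gauge; rewrite !Cmod_mult, Cmod_rho, Cpow5_Cpow, Cmod_pow, Cmod_cis, Cmod_R.
    rewrite Rabs_pos_eq by lra; ring. }
  assert (HX : Cmod X <= sum_n (fun a => 2 * (l1 (c a) * (Krow * qpow (5/2) t))) 4).
  { apply (Cmod_le_of_sum_eq_0 W X 4 a0 _ Ha0 HW); intros a Ha; unfold W, X, r.
    destruct (Nat.eq_dec a a0) as [->|Hne].
    - apply nrow_twisted_self, Ht.
    - unfold Cminus; rewrite Copp_0, Cplus_0_r.
      apply nrow_twisted_other; assumption. }
  rewrite (sum_n_ext _ (fun a => mult (l1 (c a)) (2 * (Krow * qpow (5/2) t)))),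
    (sum_n_mult_r (K := R_Ring)) in HX by (intros; change mult with Rmult; simpl; ring).
  change (mult ?u ?v) with (u * v) in HX.
  change (@sum_n (Ring.AbelianMonoid R_Ring)) with (@sum_n R_AbelianMonoid) in HX.
  apply (Rmult_le_reg_l 2); [lra|]; rewrite <- HXT.
  eapply Rle_trans; [exact HX|]; right; ring.
Qed.

Lemma moments_eq_0 a0 phi : (a0 <= 4)%nat ->
  moment (c a0) phi 0 = 0%C /\ moment (c a0) phi 1 = 0%C /\ moment (c a0) phi 2 = 0%C.
Proof.
  intros Ha0.
  assert (Hk : forall k, (k <= 2)%nat -> (binom5 k * moment (c a0) phi k)%C = 0%C).
  { apply (Cpoly_low_coefs_eq_0 _ 5 2 (sum_n (fun a => l1 (c a)) 4 * Krow) (5/2)); [lia|simpl; lra|].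
    intros t Ht; pose proof (self_row_small a0 phi t Ha0 Ht) as Hs.
    rewrite row_one_plus in Hs; exact Hs. }
  assert (Hm : forall k, (k <= 2)%nat -> moment (c a0) phi k = 0%C).
  { intros k Hk2; specialize (Hk k Hk2).
    assert (Hb : RtoC (binom5 k) <> 0%C)
      by (intros E; injection E; destruct k as [|[|[|k]]]; simpl; lra || lia).
    transitivity (/ binom5 k * (binom5 k * moment (c a0) phi k))%C; [field; exact Hb|].
    rewrite Hk; ring. }
  repeat split; apply Hm; lia.
Qed.

End Coefficients.

Theorem proposition7p16 :
  forall c : nat -> nat -> C,
    (forall (tau : C) (z : C2), 0 < Im tau ->
       sum_n (fun a => sum_n (fun b =>
         Cmult (c a b) (Cpow5 (theta (alpha_of a) (beta_of b) tau z))) 4) 4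
       = RtoC 0) ->
    forall a b : nat, (a <= 4)%nat -> (b <= 4)%nat -> c a b = RtoC 0.
Proof.
  intros c H a b Ha Hb.
  apply (coefs_eq_0_of_moments (c a)); [|exact Hb].
  intros phi; exact (moments_eq_0 c H a phi Ha).
Qed.
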